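(* Let $\mathcal X,\mathcal Y$ be Hilbert spaces and $(C,\mathbf A)$, with $C\in\mathcal L(\mathcal X,\mathcal Y)$, $\mathbf A=(A_1,\dots,A_d)\in\mathcal L(\mathcal X)^d$, a contractive pair. Then: (1) $(C,\mathbf A)$ is output-stable, $(S^R_j)^*\widehat{\mathcal O}_{C,\mathbf A}x=\widehat{\mathcal O}_{C,\mathbf A}A_jx$ for all $x$ and $j$, and hence $\operatorname{Ran}\widehat{\mathcal O}_{C,\mathbf A}$ is invariant under $(S^R_j)^*$, $j=1,\dots,d$. (2) $\widehat{\mathcal O}_{C,\mathbf A}$ is a contraction from $\mathcal X$ into $H^2_{\mathcal Y}(\mathcal F_d)$; it is isometric if and only if $(C,\mathbf A)$ is an isometric pair and $\mathbf A$ is strongly stable. (3) If $\mathcal M:=\operatorname{Ran}\widehat{\mathcal O}_{C,\mathbf A}$ is given the lifted norm $\|\widehat{\mathcal O}_{C,\mathbf A}x\|_{\mathcal M}=\|Qx\|_{\mathcal X}$, where $Q$ is the orthogonal projection of $\mathcal X$ onto $(\operatorname{Ker}\widehat{\mathcal O}_{C,\mathbf A})^\perp$, then $\widehat{\mathcal O}_{C,\mathbf A}$ is a coisometry of $\mathcal X$ onto $\mathcal M$, $\mathcal M$ is contractively contained in $H^2_{\mathcal Y}(\mathcal F_d)$, and $\mathcal M$ is isometrically equal to the formal noncommutative reproducing kernel Hilbert space $\mathcal H(K_{C,\mathbf A})$ with kernel $K_{C,\mathbf A}(z,w)=C(I-Z(z)A)^{-1}(I-A^*Z(w)^* )^{-1}C^*$.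 (4) With this norm, $\sum_{j=1}^d\|(S^R_j)^*f\|^2_{\mathcal H(K_{C,\mathbf A})}\le\|f\|^2_{\mathcal H(K_{C,\mathbf A})}-\|f_\emptyset\|^2_{\mathcal Y}$ for all $f\in\mathcal H(K_{C,\mathbf A})$; moreover equality holds for all $f$ if and only if $Q-\sum_{j=1}^dA_j^*QA_j=C^*C$. In particular, if $(C,\mathbf A)$ is observable, equality holds for all $f$ if and only if $(C,\mathbf A)$ is an isometric pair.
   Context: $\mathcal F_d$: free semigroup of words on $\{1,\dots,d\}$, empty word $\emptyset$; for $v=i_N\cdots i_1$: $|v|=N$, $v^\top=i_1\cdots i_N$, $\mathbf A^v=A_{i_N}\cdots A_{i_1}$, $z^v=z_{i_N}\cdots z_{i_1}$ (noncommuting indeterminates). $H^2_{\mathcal Y}(\mathcal F_d)$: formal power series $\sum_vf_vz^v$ with $f_v\in\mathcal Y$, $\sum\|f_v\|^2<\infty$; $(S^R_j)^*\colon\sum_vf_vz^v\mapsto\sum_vf_{vj}z^v$. $\widehat{\mathcal O}_{C,\mathbf A}x=\sum_v(C\mathbf A^vx)z^v$; output-stable means $\widehat{\mathcal O}_{C,\mathbf A}$ is bounded $\mathcal X\to H^2_{\mathcal Y}(\mathcal F_d)$. Contractive pair: $C^*C+\sum_jA_j^*A_j\le I$; isometric: equality. $\mathbf A$ strongly stable: $\sum_{|v|=N}\|\mathbf A^vx\|^2\to0$ for all $x$. Observable: $\operatorname{Ker}\widehat{\mathcal O}_{C,\mathbf A}=\{0\}$. The kernel is the formal series $K_{C,\mathbf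 A}(z,w)=\sum_{\alpha,\beta\in\mathcal F_d}C\mathbf A^\alpha(\mathbf A^\beta)^*C^*z^\alpha w^{\beta^\top}$; for a formal kernel $K=\sum K_{\alpha,\beta}z^\alpha w^{\beta^\top}$, $\mathcal H(K)$ is the Hilbert space of formal power series $f=\sum f_\alpha z^\alpha$ (coefficients in $\mathcal Y$) such that $K_\beta y:=\sum_\alpha K_{\alpha,\beta}y\,z^\alpha\in\mathcal H(K)$ and $\langle f,K_\beta y\rangle=\langle f_\beta,y\rangle_{\mathcal Y}$ for all $\beta\in\mathcal F_d$, $y\in\mathcal Y$, $f\in\mathcal H(K)$. *)

From HB Require Import structures.
From mathcomp Require Import all_boot all_order all_algebra.
From mathcomp Require Import boolp classical_sets reals.
From mathcomp Require Export complex.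
From Stdlib Require Import ClassicalEpsilon.
Set Implicit Arguments. Unset Strict Implicit. Unset Printing Implicit Defensive.
Import Order.TTheory GRing.Theory Num.Theory.
Local Open Scope ring_scope.

Definition ipnorm2 (R : realType) (V : Type) (ip : V -> V -> R[i]) (v : V) : R :=
  complex.Re (ip v v).

Definition ip_cauchy (R : realType) (V : zmodType) (ip : V -> V -> R[i])
  (u : nat -> V) : Prop :=
  forall e : R, 0 < e -> exists N : nat, forall m n : nat,
    (N <= m)%N -> (N <= n)%N -> ipnorm2 ip (u m - u n) < e.

Definition ip_converges_to (R : realType) (V : zmodType) (ip : V -> V -> R[i])
  (u : nat -> V) (l : V) : Prop :=
  forall e : R, 0 < e -> exists N : nat, forall n : nat,
    (N <= n)%N -> ipnorm2 ip (u n - l) < e.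

Record hilbert (R : realType) := Hilbert {
  hs_sort :> lmodType R[i];
  hs_ip : hs_sort -> hs_sort -> R[i];
  hs_ipDZl : forall (a : R[i]) (u v w : hs_sort),
      hs_ip (a *: u + v) w = a * hs_ip u w + hs_ip v w;
  hs_ipC : forall u v : hs_sort, hs_ip v u = (hs_ip u v)^*;
  hs_ip_ge0 : forall u : hs_sort, 0 <= hs_ip u u;
  hs_ip_eq0 : forall u : hs_sort, hs_ip u u = 0 -> u = 0;
  hs_complete : forall u : nat -> hs_sort, ip_cauchy hs_ip u ->
      exists l, ip_converges_to hs_ip u l
}.


Definition hnorm2 (R : realType) (H : hilbert R) (x : H) : R := ipnorm2 (@hs_ip R H) x.

Definition bounded_lin (R : realType) (X Y : hilbert R) (T : X -> Y) : Prop :=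
  linear T /\ exists B : R, forall x, hnorm2 (T x) <= B * hnorm2 x.

Definition is_adjoint (R : realType) (X Y : hilbert R) (T : X -> Y) (Ts : Y -> X) :=
  forall (x : X) (y : Y), hs_ip (T x) (y) = hs_ip (x) (Ts y).

Definition orth_compl (R : realType) (X : hilbert R) (S : set X) : set X :=
  [set x | forall y, S y -> hs_ip (x) (y) = 0].

Definition is_orth_proj (R : realType) (X : hilbert R) (P : X -> X) (S : set X) :=
  forall x, S (P x) /\ forall y, S y -> hs_ip (x - P x) (y) = 0.

(* A word v = i_N ... i_1 is the list [:: i_N; ...; i_1] of letters in 'I_d
   (letter k : 'I_d stands for k+1).  The empty word is [::].
   |v| = size v, v^T = rev v, the word vj is rcons v j. *)
Notation word d := (seq 'I_d).

(* formal power series sum_v f_v z^v with coefficients in Y *)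
Definition fps (d : nat) (Y : Type) := word d -> Y.

Definition Apow (V : Type) (d : nat) (A : 'I_d -> V -> V) (v : word d) (x : V) : V :=
  foldr (fun i y => A i y) x v.

Definition sum_len (R : realType) (d n : nat) (F : word d -> R) : R :=
  \sum_(t : n.-tuple 'I_d) F (tval t).

Definition h2_psum (R : realType) (d : nat) (Y : hilbert R) (f : fps d Y) (N : nat) : R :=
  \sum_(n < N) sum_len n (fun v => hnorm2 (f v)).

Definition in_H2 (R : realType) (d : nat) (Y : hilbert R) (f : fps d Y) : Prop :=
  exists B : R, forall N, h2_psum f N <= B.

(* ||f||^2_{H^2} = sum_v ||f_v||^2 (nonnegative series: supremum of partial sums) *)
Definition h2_norm2 (R : realType) (d : nat) (Y : hilbert R) (f : fps d Y) : R :=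
  sup (range (h2_psum f)).

Definition SRadj (d : nat) (Y : Type) (j : 'I_d) (f : fps d Y) : fps d Y :=
  fun v => f (rcons v j).

Definition Ohat (R : realType) (d : nat) (X Y : hilbert R) (C : X -> Y)
  (A : 'I_d -> X -> X) (x : X) : fps d Y :=
  fun v => C (Apow A v x).

Definition output_stable (R : realType) (d : nat) (X Y : hilbert R) (C : X -> Y)
  (A : 'I_d -> X -> X) : Prop :=
  (forall x, in_H2 (Ohat C A x)) /\
  exists B : R, forall x, h2_norm2 (Ohat C A x) <= B * hnorm2 x.

Definition contractive_pair (R : realType) (d : nat) (X Y : hilbert R)
  (C : X -> Y) (Cs : Y -> X) (A As : 'I_d -> X -> X) : Prop :=
  forall x : X, hs_ip (Cs (C x) + \sum_(j < d) As j (A j x)) x <= hs_ip x x.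

Definition isometric_pair (R : realType) (d : nat) (X Y : hilbert R)
  (C : X -> Y) (Cs : Y -> X) (A As : 'I_d -> X -> X) : Prop :=
  forall x : X, Cs (C x) + \sum_(j < d) As j (A j x) = x.

Definition strongly_stable (R : realType) (d : nat) (X : hilbert R)
  (A : 'I_d -> X -> X) : Prop :=
  forall x : X, forall e : R, 0 < e -> exists N0 : nat, forall N, (N0 <= N)%N ->
    sum_len N (fun v => hnorm2 (Apow A v x)) < e.

Definition observable (R : realType) (d : nat) (X Y : hilbert R) (C : X -> Y)
  (A : 'I_d -> X -> X) : Prop :=
  forall x : X, Ohat C A x = (fun _ => 0) -> x = 0.

Definition ran (A B : Type) (T : A -> B) : set B := [set f | exists x, T x = f].

(* a chosen preimage (classical choice); irrelevant outside the range *)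
Definition preim (A : zmodType) (B : Type) (T : A -> B) (f : B) : A :=
  epsilon (inhabits 0) (fun x => T x = f).

(* lifted inner product on Ran T:  <T x, T x'>_M = <Q x, Q x'>_X *)
Definition lifted_ip (R : realType) (X : hilbert R) (B : Type) (T : X -> B)
  (Q : X -> X) (f g : B) : R[i] :=
  hs_ip (Q (preim T f)) (Q (preim T g)).

Definition fps_add (R : realType) (d : nat) (Y : hilbert R) (f g : fps d Y) : fps d Y :=
  fun v => f v + g v.
Definition fps_scale (R : realType) (d : nat) (Y : hilbert R) (a : R[i]) (f : fps d Y)
  : fps d Y := fun v => a *: f v.
Definition fps_zero (R : realType) (d : nat) (Y : hilbert R) : fps d Y := fun _ => 0.

Definition fps_hilbert (R : realType) (d : nat) (Y : hilbert R)
  (S : set (fps d Y)) (ipS : fps d Y -> fps d Y -> R[i]) : Prop :=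
  S (@fps_zero R d Y) /\
  (forall a f g, S f -> S g -> S (fps_add (fps_scale a f) g)) /\
  [/\ (forall a f g h, S f -> S g -> S h ->
          ipS (fps_add (fps_scale a f) g) h = a * ipS f h + ipS g h),
      (forall f g, S f -> S g -> ipS g f = (ipS f g)^*),
      (forall f, S f -> 0 <= ipS f f /\ (ipS f f = 0 -> f = @fps_zero R d Y)) &
      (forall u : nat -> fps d Y, (forall n, S (u n)) ->
          (forall e : R, 0 < e -> exists N : nat, forall m n : nat,
             (N <= m)%N -> (N <= n)%N ->
             complex.Re (ipS (fps_add (u m) (fps_scale (-1) (u n)))
                             (fps_add (u m) (fps_scale (-1) (u n)))) < e) ->
          exists l, S l /\
          (forall e : R, 0 < e -> exists N : nat, forall n : nat, (N <= n)%N ->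
             complex.Re (ipS (fps_add (u n) (fps_scale (-1) l))
                             (fps_add (u n) (fps_scale (-1) l))) < e))].

(* a formal kernel is given through its "columns" K_beta y = sum_alpha K_{alpha,beta} y z^alpha;
   (S, ipS) is (isometrically) the formal RKHS H(K) *)
Definition is_formal_rkhs (R : realType) (d : nat) (Y : hilbert R)
  (S : set (fps d Y)) (ipS : fps d Y -> fps d Y -> R[i])
  (Kcol : word d -> Y -> fps d Y) : Prop :=
  fps_hilbert S ipS /\
  forall (beta : word d) (y : Y),
    S (Kcol beta y) /\ forall f, S f -> ipS f (Kcol beta y) = hs_ip (f beta) (y).

(* K_{C,A}(z,w) = sum_{alpha,beta} C A^alpha (A^beta)^* C^* z^alpha w^{beta^T};
   column beta: alpha |-> C A^alpha (A^beta)^* C^* y, with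
   (A^beta)^* = A_{i_1}^* ... A_{i_N}^* for beta = i_N ... i_1 *)
Definition KCA_col (R : realType) (d : nat) (X Y : hilbert R) (C : X -> Y) (Cs : Y -> X)
  (A As : 'I_d -> X -> X) (beta : word d) (y : Y) : fps d Y :=
  fun alpha => C (Apow A alpha (Apow As (rev beta) (Cs y))).

From Pilot Require Import Defs.
From HB Require Import structures.
From mathcomp Require Import all_boot all_order all_algebra.
From mathcomp Require Import boolp classical_sets reals complex.
From Stdlib Require Import ClassicalEpsilon.
From mathcomp Require Import ring lra.
Import Order.TTheory GRing.Theory Num.Theory.
Local Open Scope ring_scope.
Set Implicit Arguments. Unset Strict Implicit. Unset Printing Implicit Defensive.

(* Everything rests on the defect D(y) = |y|^2 - |Cy|^2 - sum_j |A_j y|^2, which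
   is nonnegative for a contractive pair.  Applying D to A^v x for all words
   |v| < N telescopes into the energy identity
     |x|^2 = sum_{|v|<N} |C A^v x|^2 + sum_{|v|=N} |A^v x|^2 + sum_{|v|<N} D(A^v x),
   which gives output stability and contractivity of Ohat, and shows that Ohat is
   isometric exactly when D = 0 (an isometric pair) and the middle term tends to 0
   (strong stability).
   The vectors (A^beta)^* C^* y satisfy <x, (A^beta)^* C^* y> = <(Ohat x)_beta, y>,
   so Ker Ohat is exactly their orthogonal complement; hence x - Q x lies in Ker Ohat
   and Ohat (Q x) = Ohat x.  With the lifted norm, Ohat is then an isometry from
   (Ker Ohat)^perp onto its range, which transports completeness and turns these
   vectors into the reproducing kernel columns.
   For (4), both sides of each claimed identity are quadratic forms; over the complex
   field a linear operator with vanishing quadratic form is zero, so equality of the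
   forms is the operator (Stein) equation Q - sum_j A_j^* Q A_j = C^* C. *)

Section Linear.
Variable R : realType.
Variables U V : lmodType R[i].
Variable T : U -> V.
Hypothesis T_linear : linear T.

Let Tl : {linear U -> V} := HB.pack T (GRing.isLinear.Build _ _ _ _ T T_linear).

Lemma lin0 : T 0 = 0. Proof. exact: (raddf0 Tl). Qed.
Lemma linD x y : T (x + y) = T x + T y. Proof. exact: (raddfD Tl). Qed.
Lemma linB x y : T (x - y) = T x - T y. Proof. exact: (raddfB Tl). Qed.
Lemma linZ a x : T (a *: x) = a *: T x. Proof. exact: (linearZ_LR Tl). Qed.
Lemma lin_sum I (r : seq I) (P : pred I) (F : I -> U) :
  T (\sum_(i <- r | P i) F i) = \sum_(i <- r | P i) T (F i).
Proof. exact: (raddf_sum Tl). Qed.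

End Linear.

Section InnerProduct.
Variables (R : realType) (X : hilbert R).
Local Notation ip := (@hs_ip R X).
Implicit Types u v w x y : X.

Lemma ip_linear w : linear (fun u => ip u w : R[i]^o).
Proof. by move=> a u v; rewrite hs_ipDZl. Qed.

Lemma ip0l w : ip 0 w = 0. Proof. exact: (lin0 (ip_linear w)). Qed.
Lemma ipDl u v w : ip (u + v) w = ip u w + ip v w. Proof. exact: (linD (ip_linear w) u v). Qed.
Lemma ipBl u v w : ip (u - v) w = ip u w - ip v w. Proof. exact: (linB (ip_linear w) u v). Qed.
Lemma ipZl a u w : ip (a *: u) w = a * ip u w. Proof. exact: (linZ (ip_linear w) a u). Qed.
Lemma ip_suml I (r : seq I) (P : pred I) (F : I -> X) w :
  ip (\sum_(i <- r | P i) F i) w = \sum_(i <- r | P i) ip (F i) w.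
Proof. exact: (lin_sum (ip_linear w) r P F). Qed.

Lemma ipDr u v w : ip w (u + v) = ip w u + ip w v.
Proof. by rewrite [LHS]hs_ipC ipDl [ip w u]hs_ipC [ip w v]hs_ipC; apply: rmorphD. Qed.
Lemma ipBr u v w : ip w (u - v) = ip w u - ip w v.
Proof. by rewrite [LHS]hs_ipC ipBl [ip w u]hs_ipC [ip w v]hs_ipC; apply: rmorphB. Qed.
Lemma ipZr a u w : ip w (a *: u) = a^* * ip w u.
Proof. by rewrite [LHS]hs_ipC ipZl [ip w u]hs_ipC; apply: rmorphM. Qed.

Lemma ip_selfE u : ip u u = (hnorm2 u)%:C%C.
Proof.
have := hs_ip_ge0 u; rewrite /hnorm2 /ipnorm2.
by case: (ip u u) => a b; rewrite lecE /= => /andP[/eqP -> _].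
Qed.

Lemma hnorm2_ge0 u : 0 <= hnorm2 u.
Proof. by rewrite -lecR -ip_selfE hs_ip_ge0. Qed.

Lemma hnorm2D_orth u v : ip u v = 0 -> hnorm2 (u + v) = hnorm2 u + hnorm2 v.
Proof.
move=> uv0; have vu0 : ip v u = 0 by rewrite hs_ipC uv0 conjC0.
rewrite /hnorm2 /ipnorm2 ipDl !ipDr uv0 vu0 addr0 add0r.
by case: (ip u u) => ? ?; case: (ip v v).
Qed.

Lemma quadratic_form_eq0 (G : X -> X) : linear G ->
  (forall x, ip (G x) x = 0) -> forall x, G x = 0.
Proof.
move=> G_lin G0 x.
have sym y : ip (G x) y + ip (G y) x = 0.
  by have := G0 (x + y); rewrite (linD G_lin) !ipDl !ipDr !G0 add0r addr0 addrC.
have herm y : ip (G y) x = ip (G x) y.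
  have := sym ('i *: y); rewrite (linZ G_lin) ipZr ipZl conjCi mulNr.
  by move/eqP; rewrite addrC subr_eq0 => /eqP/(mulfI (neq0Ci _)).
apply: hs_ip_eq0; have /eqP := sym (G x).
by rewrite herm -mulr2n mulrn_eq0 => /eqP.
Qed.

End InnerProduct.

Section Adjoint.
Variables (R : realType) (X Z : hilbert R) (T : X -> Z) (Ts : Z -> X).
Hypothesis T_adj : is_adjoint T Ts.

Lemma adjoint_ipl z x : hs_ip (Ts z) x = hs_ip z (T x).
Proof. by rewrite hs_ipC -T_adj -hs_ipC. Qed.

Lemma adjoint_linear : linear Ts.
Proof.
move=> a z z'; apply/eqP; rewrite -subr_eq0; apply/eqP; apply: hs_ip_eq0.
set u := _ - _; rewrite {1}/u ipBl hs_ipDZl !adjoint_ipl.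
by rewrite hs_ipDZl subrr.
Qed.

End Adjoint.

Section OrthogonalProjection.
Variables (R : realType) (X : hilbert R).
Local Notation ip := (@hs_ip R X).

Lemma orth_compl_closed (K : set X) a x y :
  orth_compl K x -> orth_compl K y -> orth_compl K (a *: x + y).
Proof. by move=> Kx Ky k Kk; rewrite hs_ipDZl Kx // Ky // mulr0 addr0. Qed.

Variable S : set X.
Hypothesis S_closed : forall a x y, S x -> S y -> S (a *: x + y).
Variable P : X -> X.
Hypothesis P_proj : is_orth_proj P S.

Lemma proj_mem x : S (P x). Proof. exact: (P_proj x).1. Qed.

Lemma proj_orth x s : S s -> ip (x - P x) s = 0. Proof. exact: (P_proj x).2. Qed.

Lemma subspaceB x y : S x -> S y -> S (x - y).
Proof. by move=> Sx Sy; rewrite addrC -scaleN1r; apply: S_closed. Qed.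

Lemma mem_orth_eq0 z : S z -> (forall s, S s -> ip z s = 0) -> z = 0.
Proof. by move=> Sz z_orth; apply: hs_ip_eq0; apply: z_orth. Qed.

Lemma proj_id s : S s -> P s = s.
Proof.
move=> Ss; apply/eqP; rewrite eq_sym -subr_eq0; apply/eqP.
by apply: mem_orth_eq0 (proj_orth s); apply: subspaceB (proj_mem s).
Qed.

Lemma proj_linear : linear P.
Proof.
move=> a x y; apply/eqP; rewrite -subr_eq0; apply/eqP.
apply: mem_orth_eq0 => [|s Ss].
  by apply: subspaceB (proj_mem _) (S_closed _ (proj_mem _) (proj_mem _)).
have ipP u : ip (P u) s = ip u s.
  by apply/eqP; rewrite eq_sym -subr_eq0 -ipBl proj_orth.
by rewrite ipBl hs_ipDZl !ipP hs_ipDZl subrr.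
Qed.

Lemma proj_ipl x y : ip (P x) y = ip (P x) (P y).
Proof.
by apply/eqP; rewrite -subr_eq0 -ipBr hs_ipC (proj_orth _ (proj_mem _)) conjC0.
Qed.

Lemma proj_ipr x y : ip x (P y) = ip (P x) (P y).
Proof. by apply/eqP; rewrite -subr_eq0 -ipBl (proj_orth _ (proj_mem _)). Qed.

Lemma proj_orth_eq0 y : (forall s, S s -> ip y s = 0) -> P y = 0.
Proof. by move=> y_orth; apply: hs_ip_eq0; rewrite -proj_ipr (y_orth _ (proj_mem _)). Qed.

Lemma proj_hnorm2_le x : hnorm2 (P x) <= hnorm2 x.
Proof.
have orth : ip (P x) (x - P x) = 0.
  by rewrite hs_ipC (proj_orth _ (proj_mem _)) conjC0.
by rewrite -[X in _ <= hnorm2 X](subrKC (P x)) (hnorm2D_orth orth) lerDl hnorm2_ge0.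
Qed.

End OrthogonalProjection.

Section Words.
Variables (R : realType) (d : nat).

Lemma Apow_rcons (V : Type) (B : 'I_d -> V -> V) (v : word d) j x :
  Apow B (rcons v j) x = Apow B v (B j x).
Proof. by rewrite /Apow foldr_rcons. Qed.

Lemma Apow_linear (V : lmodType R[i]) (B : 'I_d -> V -> V) (v : word d) :
  (forall j, linear (B j)) -> linear (Apow B v).
Proof. by move=> B_lin a x y; elim: v => [|j v IHv] //=; rewrite IHv B_lin. Qed.

Lemma Apow_adjoint (X : hilbert R) (B Bs : 'I_d -> X -> X) (v : word d) :
  (forall j, is_adjoint (B j) (Bs j)) -> is_adjoint (Apow B v) (Apow Bs (rev v)).
Proof.
move=> B_adj; elim: v => [|j v IHv] x y //=.
by rewrite B_adj IHv rev_cons Apow_rcons.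
Qed.

Lemma sum_len0 (F : word d -> R) : sum_len 0 F = F [::].
Proof.
rewrite /sum_len (eq_bigr (fun _ => F [::])) => [|t _]; last by rewrite tuple0.
by rewrite sumr_const card_tuple expn0.
Qed.

Lemma sum_lenS n (F : word d -> R) :
  sum_len n.+1 F = \sum_(j < d) sum_len n (fun v => F (j :: v)).
Proof.
rewrite /sum_len pair_big /=.
rewrite (reindex (fun p : 'I_d * n.-tuple 'I_d => [tuple of p.1 :: p.2])) //=.
exists (fun t : n.+1.-tuple 'I_d => (thead t, [tuple of behead t])).
  by case=> j t _ /=; congr pair; apply: val_inj.
by move=> t _; rewrite [in RHS](tuple_eta t).
Qed.

Lemma sum_len_ge0 n (F : word d -> R) : (forall v, 0 <= F v) -> 0 <= sum_len n F.
Proof. by move=> F_ge0; rewrite /sum_len sumr_ge0. Qed.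

End Words.

Section H2.
Variables (R : realType) (d : nat) (Y : hilbert R) (f : fps d Y).

Lemma h2_psum_mono N M : (N <= M)%N -> h2_psum f N <= h2_psum f M.
Proof.
move/subnKC <-; elim: (M - N)%N => [|k IHk]; first by rewrite addn0.
rewrite addnS /h2_psum big_ord_recr /= -/(h2_psum _ _) (le_trans IHk) // lerDl.
by apply: sum_len_ge0 => v; apply: hnorm2_ge0.
Qed.

Lemma h2_psum_has_sup : in_H2 f -> has_sup (range (h2_psum f)).
Proof. by case=> B fB; split; [exists (h2_psum f 0), 0%N | exists B => _ [N _ <-]]. Qed.

Lemma h2_psum_le_norm2 N : in_H2 f -> h2_psum f N <= h2_norm2 f.
Proof. by move=> f_H2; apply: sup_upper_bound (h2_psum_has_sup f_H2) _ (ex_intro2 _ _ N I erefl). Qed.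

Lemma h2_norm2_le B : (forall N, h2_psum f N <= B) -> h2_norm2 f <= B.
Proof. by move=> fB; apply: ge_sup => [|_ [N _ <-]]; [exists (h2_psum f 0), 0%N | exact: fB]. Qed.

Lemma h2_psum_near_norm2 e : in_H2 f -> 0 < e ->
  exists N, forall M, (N <= M)%N -> h2_norm2 f - e < h2_psum f M.
Proof.
move=> f_H2 e_gt0; have [_ [N _ <-] fN] := sup_adherent e_gt0 (h2_psum_has_sup f_H2).
by exists N => M NM; apply: lt_le_trans fN (h2_psum_mono NM).
Qed.

End H2.

Section Energy.
Variables (R : realType) (d : nat) (X Y : hilbert R).
Variables (C : X -> Y) (Cs : Y -> X) (A As : 'I_d -> X -> X).
Hypothesis C_adj : is_adjoint C Cs.
Hypothesis A_adj : forall j, is_adjoint (A j) (As j).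
Hypothesis AC_contr : contractive_pair C Cs A As.
Local Notation O := (Ohat C A).

Definition defect (x : X) : R :=
  hnorm2 x - hnorm2 (C x) - \sum_(j < d) hnorm2 (A j x).

Lemma defect_ge0 x : 0 <= defect x.
Proof.
have := AC_contr x; rewrite ipDl ip_suml (adjoint_ipl C_adj) ip_selfE.
under eq_bigr do rewrite (adjoint_ipl (A_adj _)) ip_selfE.
rewrite ip_selfE -rmorph_sum -rmorphD lecR.
by rewrite /defect -addrA -opprD subr_ge0.
Qed.

Definition tail_norm2 (N : nat) (x : X) : R :=
  sum_len N (fun v => hnorm2 (Apow A v x)).

Definition defect_sum (N : nat) (x : X) : R :=
  \sum_(n < N) sum_len n (fun v => defect (Apow A v x)).

Lemma tail_norm2_ge0 N x : 0 <= tail_norm2 N x.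
Proof. by apply: sum_len_ge0 => v; apply: hnorm2_ge0. Qed.

Lemma defect_sum_ge0 N x : 0 <= defect_sum N x.
Proof. by apply: sumr_ge0 => n _; apply: sum_len_ge0 => v; apply: defect_ge0. Qed.

Lemma defect_le_defect_sum N x : defect x <= defect_sum N.+1 x.
Proof.
rewrite /defect_sum big_ord_recl sum_len0 lerDl.
by apply: sumr_ge0 => n _; apply: sum_len_ge0 => v; apply: defect_ge0.
Qed.

Lemma tail_norm2S N x :
  tail_norm2 N x = sum_len N (fun v => hnorm2 (O x v)) + tail_norm2 N.+1 x
                   + sum_len N (fun v => defect (Apow A v x)).
Proof.
rewrite /tail_norm2 sum_lenS /sum_len exchange_big -!big_split.
by apply: eq_bigr => t _; rewrite /defect /Ohat /=; ring.
Qed.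

Lemma energy_identity N x :
  hnorm2 x = h2_psum (O x) N + tail_norm2 N x + defect_sum N x.
Proof.
elim: N => [|N IHN].
  by rewrite /h2_psum /defect_sum !big_ord0 /tail_norm2 sum_len0 add0r addr0.
rewrite /h2_psum /defect_sum !big_ord_recr /= -/(h2_psum _ _) -/(defect_sum _ _).
by rewrite IHN tail_norm2S; ring.
Qed.

Lemma h2_psum_Ohat_le N x : h2_psum (O x) N <= hnorm2 x.
Proof.
by rewrite (energy_identity N x) -addrA lerDl addr_ge0 ?tail_norm2_ge0 ?defect_sum_ge0.
Qed.

Lemma Ohat_in_H2 x : in_H2 (O x).
Proof. by exists (hnorm2 x) => N; apply: h2_psum_Ohat_le. Qed.

Lemma h2_norm2_Ohat_le x : h2_norm2 (O x) <= hnorm2 x.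
Proof. by apply: h2_norm2_le => N; apply: h2_psum_Ohat_le. Qed.

Lemma tail_defect_small x : h2_norm2 (O x) = hnorm2 x -> forall e, 0 < e ->
  exists N, forall M, (N <= M)%N -> tail_norm2 M x + defect_sum M x < e.
Proof.
move=> O_iso e e_gt0; have [N HN] := h2_psum_near_norm2 (Ohat_in_H2 x) e_gt0.
by exists N => M NM; have := HN M NM; rewrite O_iso (energy_identity M x); lra.
Qed.

Lemma Ohat_isometry_iff :
  (forall x, h2_norm2 (O x) = hnorm2 x) <->
  (forall x, defect x = 0) /\ strongly_stable A.
Proof.
split=> [O_iso | [defect0 A_stable] x].
  split=> [x | x e e_gt0].
    apply/eqP; rewrite eq_le defect_ge0 andbT leNgt; apply/negP => defect_gt0.
    have [N HN] := tail_defect_small (O_iso x) defect_gt0.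
    have := HN N.+1 (leqnSn N); have := defect_le_defect_sum N x.
    have := tail_norm2_ge0 N.+1 x; lra.
  have [N HN] := tail_defect_small (O_iso x) e_gt0; exists N => M NM.
  have := HN M NM; have := defect_sum_ge0 M x; rewrite /tail_norm2; lra.
have sum0 N : defect_sum N x = 0.
  by apply: big1 => n _; rewrite /sum_len big1 // => t _; rewrite defect0.
apply/eqP; rewrite eq_le h2_norm2_Ohat_le /= leNgt; apply/negP => lt_x.
have gap : 0 < hnorm2 x - h2_norm2 (O x) by rewrite subr_gt0.
have [N HN] := A_stable x _ gap; have := HN N (leqnn N).
have := energy_identity N x; rewrite sum0.
have := h2_psum_le_norm2 N (Ohat_in_H2 x); rewrite /tail_norm2; lra.
Qed.

End Energy.

Section Stein.
Variables (R : realType) (d : nat) (X Y : hilbert R).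
Variables (C : X -> Y) (Cs : Y -> X) (A As : 'I_d -> X -> X).
Hypothesis C_lin : linear C.
Hypothesis A_lin : forall j, linear (A j).
Hypothesis C_adj : is_adjoint C Cs.
Hypothesis A_adj : forall j, is_adjoint (A j) (As j).
Variable S : set X.
Hypothesis S_closed : forall a x y, S x -> S y -> S (a *: x + y).
Variable P : X -> X.
Hypothesis P_proj : is_orth_proj P S.

Definition stein_op (x : X) : X :=
  P x - \sum_(j < d) As j (P (A j x)) - Cs (C x).

Definition stein_form (x : X) : R :=
  hnorm2 (P x) - \sum_(j < d) hnorm2 (P (A j x)) - hnorm2 (C x).

Lemma stein_op_linear : linear stein_op.
Proof.
have P_lin := proj_linear S_closed P_proj.
move=> a x y; rewrite /stein_op P_lin C_lin (adjoint_linear C_adj).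
under eq_bigr do rewrite A_lin P_lin (adjoint_linear (A_adj _)).
by rewrite big_split -scaler_sumr !scalerBr [RHS]addrACA [X in _ = X + _]addrACA !opprD.
Qed.

Lemma ip_stein_op x : hs_ip (stein_op x) x = (stein_form x)%:C%C.
Proof.
rewrite /stein_op /stein_form !ipBl ip_suml (proj_ipl P_proj) ip_selfE.
rewrite (adjoint_ipl C_adj) ip_selfE.
under eq_bigr do rewrite (adjoint_ipl (A_adj _)) (proj_ipl P_proj) ip_selfE.
by rewrite !rmorphB rmorph_sum.
Qed.

Lemma stein_form_eq0_iff :
  (forall x, stein_form x = 0) <->
  (forall x, P x - \sum_(j < d) As j (P (A j x)) = Cs (C x)).
Proof.
have stein_opE x : stein_op x = 0 <-> P x - \sum_(j < d) As j (P (A j x)) = Cs (C x).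
  by rewrite /stein_op; split=> [/eqP|<-]; rewrite ?subr_eq0 ?subrr => // /eqP.
split=> [form0 x | stein_eq x].
  apply/stein_opE; apply: (quadratic_form_eq0 stein_op_linear) => {}x.
  by rewrite ip_stein_op form0.
by apply: complexI; rewrite -ip_stein_op (proj2 (stein_opE x) (stein_eq x)) ip0l.
Qed.

End Stein.

Section IsometricPair.
Variables (R : realType) (d : nat) (X Y : hilbert R).
Variables (C : X -> Y) (Cs : Y -> X) (A As : 'I_d -> X -> X).
Hypothesis C_lin : linear C.
Hypothesis A_lin : forall j, linear (A j).
Hypothesis C_adj : is_adjoint C Cs.
Hypothesis A_adj : forall j, is_adjoint (A j) (As j).

Lemma isometric_pairE :
  isometric_pair C Cs A As <-> forall x, x - \sum_(j < d) As j (A j x) = Cs (C x).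
Proof.
have E x : Cs (C x) + \sum_(j < d) As j (A j x) = x <->
           x - \sum_(j < d) As j (A j x) = Cs (C x).
  by split=> iso; [rewrite -{1}iso addrK | rewrite -iso subrK].
by split=> iso x; apply/E.
Qed.

Lemma isometric_pair_iff_defect_eq0 :
  isometric_pair C Cs A As <-> forall x, defect C A x = 0.
Proof.
pose T := [set: X]%classic.
have T_closed a x y : T x -> T y -> T (a *: x + y) by [].
have id_proj : is_orth_proj id T by move=> x; split=> // y _; rewrite subrr ip0l.
apply: iff_trans isometric_pairE _.
apply: iff_trans (iff_sym (stein_form_eq0_iff C_lin A_lin C_adj A_adj T_closed id_proj)) _.
by split=> form0 x; rewrite -(form0 x) /stein_form /defect addrAC.
Qed.

End IsometricPair.

Lemma preimK (U : zmodType) (V : Type) (T : U -> V) f : ran T f -> T (Defs.preim T f) = f.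
Proof. by case=> x Tx; apply: (epsilon_spec _ (fun z => T z = f) (ex_intro _ x Tx)). Qed.

Section Observability.
Variables (R : realType) (d : nat) (X Y : hilbert R).
Variables (C : X -> Y) (Cs : Y -> X) (A As : 'I_d -> X -> X).
Hypothesis C_lin : linear C.
Hypothesis A_lin : forall j, linear (A j).
Hypothesis C_adj : is_adjoint C Cs.
Hypothesis A_adj : forall j, is_adjoint (A j) (As j).
Local Notation O := (Ohat C A).
Local Notation ip := (@hs_ip R X).
Implicit Types x z : X.

Lemma SRadj_Ohat j x : SRadj j (O x) = O (A j x).
Proof. by apply: funext => v; rewrite /SRadj /Ohat Apow_rcons. Qed.

Lemma Ohat_coef_linear (v : word d) : linear (fun x => O x v).
Proof. by move=> a x y; rewrite /Ohat (Apow_linear _ A_lin) C_lin. Qed.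

Lemma OhatP a x y : O (a *: x + y) = fps_add (fps_scale a (O x)) (O y).
Proof. by apply: funext => v; rewrite (Ohat_coef_linear v). Qed.

Lemma OhatB x y : O (x - y) = fps_add (O x) (fps_scale (-1) (O y)).
Proof. by rewrite addrC -scaleN1r OhatP; apply: funext => v; rewrite /fps_add addrC. Qed.

Lemma Ohat0 : O 0 = fps_zero Y.
Proof. by apply: funext => v; apply: (lin0 (Ohat_coef_linear v)). Qed.

(* The adjoint of [Ohat] applied to the monomial [y z^beta]. *)
Definition Ohat_adj_mono (beta : word d) (y : Y) : X := Apow As (rev beta) (Cs y).

Lemma ip_Ohat_adj_mono x beta y : ip x (Ohat_adj_mono beta y) = hs_ip (O x beta) y.
Proof. by rewrite /Ohat C_adj (Apow_adjoint _ A_adj). Qed.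

Local Notation W := (orth_compl [set x | O x = (fun _ => 0)]).

Lemma Ohat_adj_mono_orth beta y : W (Ohat_adj_mono beta y).
Proof. by move=> k /= Ok0; rewrite hs_ipC ip_Ohat_adj_mono Ok0 ip0l conjC0. Qed.

Lemma Ohat_eq0_of_orth z : (forall w, W w -> ip z w = 0) -> O z = (fun _ => 0).
Proof.
move=> z_orth; apply: funext => v; apply: hs_ip_eq0.
by rewrite -ip_Ohat_adj_mono (z_orth _ (Ohat_adj_mono_orth _ _)).
Qed.

Variable Q : X -> X.
Hypothesis Q_proj : is_orth_proj Q W.

Let W_closed := @orth_compl_closed R X [set x | O x = (fun _ => 0)].

Lemma Ohat_proj x : O (Q x) = O x.
Proof.
apply: funext => v; have := congr1 (fun f => f v) (Ohat_eq0_of_orth (proj_orth Q_proj x)).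
by rewrite /= (linB (Ohat_coef_linear v)) => /eqP; rewrite subr_eq0 eq_sym => /eqP.
Qed.

Lemma proj_Ohat_eq x z : O x = O z -> Q x = Q z.
Proof.
move=> Oxz; apply/eqP; rewrite -subr_eq0 -(linB (proj_linear W_closed Q_proj)); apply/eqP.
apply: (proj_orth_eq0 Q_proj) => w Ww.
have Oxz0 : O (x - z) = (fun _ => 0).
  by apply: funext => v; rewrite OhatB Oxz /fps_add /fps_scale scaleN1r subrr.
by rewrite hs_ipC (Ww _ Oxz0) conjC0.
Qed.

Lemma proj_preim_Ohat x : Q (Defs.preim O (O x)) = Q x.
Proof. by apply/proj_Ohat_eq/preimK; exists x. Qed.

Lemma lifted_ip_Ohat x z : lifted_ip O Q (O x) (O z) = ip (Q x) (Q z).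
Proof. by rewrite /lifted_ip !proj_preim_Ohat. Qed.

Lemma lifted_norm2_Ohat x : ipnorm2 (lifted_ip O Q) (O x) = hnorm2 (Q x).
Proof. by rewrite /ipnorm2 lifted_ip_Ohat. Qed.

Lemma Ohat_coisometry : exists Os : fps d Y -> X,
  (forall x f, ran O f -> lifted_ip O Q (O x) f = ip x (Os f)) /\
  (forall f, ran O f -> O (Os f) = f).
Proof.
exists (fun f => Q (Defs.preim O f)); split=> [x _ [z <-] | f Of].
  by rewrite lifted_ip_Ohat proj_preim_Ohat (proj_ipr Q_proj x).
by rewrite Ohat_proj preimK.
Qed.

Lemma ran_Ohat_fps_hilbert : fps_hilbert (ran O) (lifted_ip O Q).
Proof.
have Q_lin := proj_linear W_closed Q_proj.
split; first by exists 0; rewrite Ohat0.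
split; first by move=> a _ _ [x <-] [z <-]; exists (a *: x + z); rewrite OhatP.
split.
- move=> a _ _ _ [x <-] [z <-] [z' <-].
  by rewrite -OhatP !lifted_ip_Ohat Q_lin hs_ipDZl.
- by move=> f g _ _; rewrite /lifted_ip hs_ipC.
- move=> _ [x <-]; rewrite lifted_ip_Ohat; split=> [|Qx0]; first exact: hs_ip_ge0.
  by rewrite -Ohat_proj (hs_ip_eq0 Qx0) Ohat0.
- move=> u u_ran u_cauchy.
  pose w n := Q (Defs.preim O (u n)).
  have Ow n : O (w n) = u n by rewrite Ohat_proj preimK.
  have w_cauchy : ip_cauchy ip w.
    move=> e e_gt0; have [N HN] := u_cauchy e e_gt0; exists N => m n Nm Nn.
    have := HN m n Nm Nn; rewrite -!Ow -OhatB lifted_ip_Ohat.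
    have W_diff : W (w m - w n).
      exact: (subspaceB W_closed (proj_mem Q_proj _) (proj_mem Q_proj _)).
    by rewrite (proj_id W_closed Q_proj W_diff).
  have [l wl] := hs_complete w_cauchy.
  exists (O l); split=> [|e e_gt0]; first by exists l.
  have [N HN] := wl e e_gt0; exists N => n Nn.
  rewrite -Ow -OhatB lifted_ip_Ohat.
  exact: le_lt_trans (proj_hnorm2_le Q_proj _) (HN n Nn).
Qed.

Lemma ran_Ohat_formal_rkhs : is_formal_rkhs (ran O) (lifted_ip O Q) (KCA_col C Cs A As).
Proof.
split=> [|beta y]; first exact: ran_Ohat_fps_hilbert.
split=> [|_ [x <-]]; first by exists (Ohat_adj_mono beta y).
change (lifted_ip O Q (O x) (O (Ohat_adj_mono beta y)) = hs_ip (O x beta) y).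
rewrite lifted_ip_Ohat -(proj_ipr Q_proj) (proj_id W_closed Q_proj (Ohat_adj_mono_orth _ _)).
exact: ip_Ohat_adj_mono.
Qed.

Hypothesis AC_contr : contractive_pair C Cs A As.

Lemma ran_Ohat_contractive f :
  ran O f -> in_H2 f /\ h2_norm2 f <= ipnorm2 (lifted_ip O Q) f.
Proof.
case=> x <-; split; first exact: Ohat_in_H2 C_adj A_adj AC_contr x.
by rewrite lifted_norm2_Ohat -Ohat_proj; apply: h2_norm2_Ohat_le C_adj A_adj AC_contr _.
Qed.

Lemma sum_lifted_norm2_SRadj x :
  \sum_(j < d) ipnorm2 (lifted_ip O Q) (SRadj j (O x)) = \sum_(j < d) hnorm2 (Q (A j x)).
Proof. by apply: eq_bigr => j _; rewrite SRadj_Ohat lifted_norm2_Ohat. Qed.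

Lemma sum_lifted_norm2_SRadj_le f : ran O f ->
  \sum_(j < d) ipnorm2 (lifted_ip O Q) (SRadj j f) <=
  ipnorm2 (lifted_ip O Q) f - hnorm2 (f [::]).
Proof.
case=> x <-; rewrite -Ohat_proj sum_lifted_norm2_SRadj lifted_norm2_Ohat.
rewrite (proj_id W_closed Q_proj (proj_mem Q_proj x)) /Ohat /=.
have QA_le : \sum_(j < d) hnorm2 (Q (A j (Q x))) <= \sum_(j < d) hnorm2 (A j (Q x)).
  by apply: ler_sum => j _; apply: proj_hnorm2_le Q_proj _.
have := defect_ge0 C_adj A_adj AC_contr (Q x); rewrite /defect; lra.
Qed.

Lemma sum_lifted_norm2_SRadj_eq_iff :
  (forall f, ran O f ->
     \sum_(j < d) ipnorm2 (lifted_ip O Q) (SRadj j f) =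
     ipnorm2 (lifted_ip O Q) f - hnorm2 (f [::])) <->
  (forall x, Q x - \sum_(j < d) As j (Q (A j x)) = Cs (C x)).
Proof.
apply: iff_trans _ (stein_form_eq0_iff C_lin A_lin C_adj A_adj W_closed Q_proj).
split=> [shift_eq x | form0 _ [x <-]].
  have := shift_eq _ (ex_intro _ x erefl).
  by rewrite sum_lifted_norm2_SRadj lifted_norm2_Ohat /stein_form /Ohat /=; lra.
have := form0 x; rewrite sum_lifted_norm2_SRadj lifted_norm2_Ohat /stein_form /Ohat /=; lra.
Qed.

Lemma proj_id_of_observable : observable C A -> forall x, Q x = x.
Proof.
move=> obs x; apply/eqP; rewrite eq_sym -subr_eq0; apply/eqP; apply: obs.
exact: Ohat_eq0_of_orth (proj_orth Q_proj x).
Qed.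

Lemma observable_stein_iff_isometric : observable C A ->
  (forall x, Q x - \sum_(j < d) As j (Q (A j x)) = Cs (C x)) <-> isometric_pair C Cs A As.
Proof.
move=> obs; apply: iff_trans _ (iff_sym (@isometric_pairE _ _ _ _ C Cs A As)).
by have -> : Q = id by apply: funext; apply: proj_id_of_observable.
Qed.

End Observability.

Unset Implicit Arguments.

Theorem theorem2p10 (R : realType) (d : nat) (X Y : hilbert R)
  (C : X -> Y) (Cs : Y -> X) (A As : 'I_d -> X -> X)
  (hC : bounded_lin C) (hA : forall j, bounded_lin (A j))
  (hCs : is_adjoint C Cs) (hAs : forall j, is_adjoint (A j) (As j))
  (hcontr : contractive_pair C Cs A As)
  (Q : X -> X) (hQ : is_orth_proj Q (orth_compl [set x | Ohat C A x = (fun _ => 0)])) :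
  let O := Ohat C A in
  let M := ran O in
  let ipM := lifted_ip O Q in
  (* (1) *)
  [/\ output_stable C A,
      (forall (j : 'I_d) (x : X), SRadj j (O x) = O (A j x)) &
      (forall (j : 'I_d) (f : fps d Y), M f -> M (SRadj j f))] /\
  (* (2) *)
  ((forall x, h2_norm2 (O x) <= hnorm2 x) /\
   ((forall x, h2_norm2 (O x) = hnorm2 x) <->
      isometric_pair C Cs A As /\ strongly_stable A)) /\
  (* (3) *)
  [/\ (forall x, ipnorm2 ipM (O x) = hnorm2 (Q x)),
      (exists Os : fps d Y -> X,
          (forall x f, M f -> ipM (O x) f = hs_ip (x) (Os f)) /\
          (forall f, M f -> O (Os f) = f)),
      (forall f, M f -> in_H2 f /\ h2_norm2 f <= ipnorm2 ipM f) &
      is_formal_rkhs M ipM (KCA_col C Cs A As)] /\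
  (* (4) *)
  [/\ (forall f, M f ->
         \sum_(j < d) ipnorm2 ipM (SRadj j f) <= ipnorm2 ipM f - hnorm2 (f [::])),
      ((forall f, M f ->
          \sum_(j < d) ipnorm2 ipM (SRadj j f) = ipnorm2 ipM f - hnorm2 (f [::])) <->
       (forall x, Q x - \sum_(j < d) As j (Q (A j x)) = Cs (C x))) &
      (observable C A ->
       ((forall f, M f ->
          \sum_(j < d) ipnorm2 ipM (SRadj j f) = ipnorm2 ipM f - hnorm2 (f [::])) <->
        isometric_pair C Cs A As))].
Proof.
have C_lin : linear C := hC.1.
have A_lin j : linear (A j) := (hA j).1.
have iso_iff := isometric_pair_iff_defect_eq0 C_lin A_lin hCs hAs.
have shift_iff := sum_lifted_norm2_SRadj_eq_iff C_lin A_lin hCs hAs hQ.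
move=> O M ipM; rewrite {}/ipM {}/M {}/O.
split.
  split=> [|j x|j _ [x <-]]; last by exists (A j x); rewrite SRadj_Ohat.
  - split=> [x|]; first exact: (Ohat_in_H2 hCs hAs hcontr x).
    by exists 1 => x; rewrite mul1r; exact: (h2_norm2_Ohat_le hCs hAs hcontr x).
  - exact: SRadj_Ohat.
split.
  split=> [x|]; first exact: (h2_norm2_Ohat_le hCs hAs hcontr x).
  apply: iff_trans (Ohat_isometry_iff hCs hAs hcontr) _.
  by split=> -[? ?]; split=> //; apply/iso_iff.
split.
  split=> [x|||].
  - exact: (lifted_norm2_Ohat C_lin A_lin hQ x).
  - exact: (Ohat_coisometry C_lin A_lin hCs hAs hQ).
  - exact: (ran_Ohat_contractive C_lin A_lin hCs hAs hQ hcontr).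
  - exact: (ran_Ohat_formal_rkhs C_lin A_lin hCs hAs hQ).
split=> [|//|obs].
- exact: (sum_lifted_norm2_SRadj_le C_lin A_lin hCs hAs hQ hcontr).
- exact: iff_trans shift_iff (observable_stein_iff_isometric hCs hAs hQ obs).
Qed.
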